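(* Let $\mathcal{X}=(X_1,\ldots,X_r)$ be a directed path-decomposition of a digraph $G=(V,E)$. Let $A,B\subseteq V$ with $A\cap B=\emptyset$ and $\{(u,v),(v,u) : u\in A, v\in B\}\subseteq E$. If there is some $i$, $1\le i\le r$, with $A\subseteq X_i$, then there are $1\le i_1\le i_2\le r$ such that 1. $A\subseteq X_i$ for all $i$ with $i_1\le i\le i_2$, 2. $B\subseteq \bigcup_{i=i_1}^{i_2}X_i$, and 3. $(X'_{i_1},\ldots,X'_{i_2})$, where $X'_i=X_i\cap(A\cup B)$, is a directed path-decomposition of the subdigraph of $G$ induced by $A\cup B$.
   Context: Digraphs are finite, without loops or multiple arcs. A directed path-decomposition of a digraph $G=(V,E)$ is a sequence $(X_1,\ldots,X_r)$ of subsets of $V$ such that: (i) $X_1\cup\cdots\cup X_r=V$; (ii) for each $(u,v)\in E$ there are $i\le j$ with $u\in X_i$, $v\in X_j$; (iii) if $u\in X_i$ and $u\in X_j$ with $i\le j$, then $u\in X_\ell$ for all $i\le\ell\le j$. *)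

From mathcomp Require Import all_boot.
Set Implicit Arguments. Unset Strict Implicit. Unset Printing Implicit Defensive.

(* A digraph is given by a finite vertex type V, a vertex set W : {set V}
   and an arc relation E : rel V (only arcs between vertices of W count).
   A directed path-decomposition (X_1,...,X_r) is represented by the
   sequence X : seq {set V}; the bag X_i (1 <= i <= r) is nth set0 X (i-1),
   i.e. indices are 0-based in Rocq. *)

Definition bag (V : finType) (X : seq {set V}) (i : nat) : {set V} :=
  nth set0 X i.

Definition is_dpd (V : finType) (W : {set V}) (E : rel V) (X : seq {set V}) : Prop :=
  (\bigcup_(i < size X) bag X i = W) /\
  (forall u v, u \in W -> v \in W -> E u v ->
     exists i j, [/\ i <= j, j < size X, u \in bag X i & v \in bag X j]) /\
  (forall u i j l, i <= l <= j -> j < size X ->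
     u \in bag X i -> u \in bag X j -> u \in bag X l).

Definition restrict_bags (V : finType) (X : seq {set V}) (i1 i2 : nat) (S : {set V})
  : seq {set V} :=
  [seq bag X i :&: S | i <- iota i1 (i2 - i1).+1].

From mathcomp Require Import all_boot zify.

Set Implicit Arguments.
Unset Strict Implicit.
Unset Printing Implicit Defensive.

(* Take for [i1] and [i2] the first and the last bag containing A; by
   convexity A lies in every bag in between.  A vertex b of B occurs in some
   bag; if it occurred only before [i1], then for every a in A the arc (a,b)
   places a in a bag no later than one containing b, hence before [i1], and
   by convexity a lies in bag [i1 - 1], contradicting the choice of [i1];
   symmetrically, the arcs (b,a) rule out b occurring only after [i2].  Finally, once every vertex of
   S = A ∪ B occurs in the window [i1, i2], clamping bag indices into the
   window turns the bags of X into a directed path-decomposition of G[S]. *)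

Definition clamp (lo hi i : nat) : nat := maxn lo (minn i hi).

Lemma size_restrict_bags (V : finType) (X : seq {set V}) i1 i2 S :
  size (restrict_bags X i1 i2 S) = (i2 - i1).+1.
Proof. by rewrite size_map size_iota. Qed.

Lemma bag_restrict_bags (V : finType) (X : seq {set V}) i1 i2 S k :
  k <= i2 - i1 -> bag (restrict_bags X i1 i2 S) k = bag X (i1 + k) :&: S.
Proof. by move=> hk; rewrite /bag (nth_map 0) ?size_iota ?nth_iota. Qed.

Lemma mem_restrict_bags (V : finType) (X : seq {set V}) i1 i2 S m w :
  i1 <= m <= i2 ->
  (w \in bag (restrict_bags X i1 i2 S) (m - i1)) = (w \in bag X m) && (w \in S).
Proof.
move=> hm; rewrite bag_restrict_bags; last by lia.
by rewrite subnKC ?inE //; lia.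
Qed.

Section DirectedPathDecomposition.

Variables (V : finType) (W : {set V}) (E : rel V) (X : seq {set V}).
Hypothesis dpdX : is_dpd W E X.

Lemma dpd_cover : \bigcup_(i < size X) bag X i = W.
Proof. by case: dpdX. Qed.

Lemma dpd_arc u v : u \in W -> v \in W -> E u v ->
  exists i j, [/\ i <= j, j < size X, u \in bag X i & v \in bag X j].
Proof. by case: dpdX => _ [arc _]; apply: arc. Qed.

Lemma dpd_between u i j l : i <= l <= j -> j < size X ->
  u \in bag X i -> u \in bag X j -> u \in bag X l.
Proof. by case: dpdX => _ [_ convex]; apply: convex. Qed.

Lemma subset_bag_between (A : {set V}) i j l : i <= l <= j -> j < size X ->
  A \subset bag X i -> A \subset bag X j -> A \subset bag X l.
Proof.
move=> hl jX /subsetP Ai /subsetP Aj; apply/subsetP => a Aa.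
exact: dpd_between hl jX (Ai a Aa) (Aj a Aa).
Qed.

Lemma mem_bag_cover w : w \in W -> exists2 k, k < size X & w \in bag X k.
Proof. by rewrite -dpd_cover => /bigcupP[k _ wk]; exists k. Qed.

Lemma mem_bag_clamp w i1 i2 m i : i1 <= m <= i2 -> i2 < size X -> i < size X ->
  w \in bag X m -> w \in bag X i -> w \in bag X (clamp i1 i2 i).
Proof.
rewrite /clamp => hm i2X iX wm wi; case: (leqP i m) => im.
- by apply: (dpd_between _ _ wi wm); lia.
- by apply: (dpd_between _ _ wm wi); lia.
Qed.

Lemma subset_bag_pred (A : {set V}) b k i :
  A \subset W -> b \in W -> (forall a, a \in A -> E a b) ->
  k < i < size X -> b \in bag X k -> b \notin bag X i ->
  A \subset bag X i -> A \subset bag X i.-1.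
Proof.
move=> /subsetP AW bW Eab hi bk bNi /subsetP Ai; apply/subsetP => a Aa.
have [p [q [pq qX ap bq]]] := dpd_arc (AW a Aa) bW (Eab a Aa).
have qi : q < i.
  rewrite ltnNge; apply/negP => iq; move/negP: bNi; apply.
  by apply: (dpd_between _ _ bk bq); lia.
by apply: (dpd_between _ _ ap (Ai a Aa)); lia.
Qed.

Lemma subset_bag_succ (A : {set V}) b k i :
  A \subset W -> b \in W -> (forall a, a \in A -> E b a) ->
  i < k < size X -> b \in bag X k -> b \notin bag X i ->
  A \subset bag X i -> A \subset bag X i.+1.
Proof.
move=> /subsetP AW bW Eba hi bk bNi /subsetP Ai; apply/subsetP => a Aa.
have [p [q [pq qX bp aq]]] := dpd_arc bW (AW a Aa) (Eba a Aa).
have ip : i < p.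
  rewrite ltnNge; apply/negP => pi; move/negP: bNi; apply.
  by apply: (dpd_between _ _ bp bk); lia.
by apply: (dpd_between _ _ (Ai a Aa) aq); lia.
Qed.

Lemma mem_bag_window (A : {set V}) i1 i2 b :
  A \subset W -> i2 < size X -> A \subset bag X i1 -> A \subset bag X i2 ->
  (forall i, i < size X -> A \subset bag X i -> i1 <= i <= i2) ->
  b \in W -> (forall a, a \in A -> E a b /\ E b a) ->
  exists2 j, i1 <= j <= i2 & b \in bag X j.
Proof.
move=> AW i2X Ai1 Ai2 window bW EAb.
have i12 : i1 <= i2 by have /andP[] := window i2 i2X Ai2.
have [k kX bk] := mem_bag_cover bW.
case: (ltnP k i1) => [ki1 | i1k].
  exists i1; first by rewrite leqnn.
  apply/negPn/negP => bNi1.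
  have A_pred : A \subset bag X i1.-1.
    by apply: (subset_bag_pred AW bW _ _ bk bNi1 Ai1); [move=> a /EAb[] | lia].
  by have := window i1.-1 ltac:(lia) A_pred; lia.
case: (leqP k i2) => [ki2 | i2k]; first by exists k; [lia |].
exists i2; first by rewrite i12 leqnn.
apply/negPn/negP => bNi2.
have A_succ : A \subset bag X i2.+1.
  by apply: (subset_bag_succ AW bW _ _ bk bNi2 Ai2); [move=> a /EAb[] | lia].
by have := window i2.+1 ltac:(lia) A_succ; lia.
Qed.

Lemma restrict_bags_dpd (S : {set V}) i1 i2 :
  S \subset W -> i1 <= i2 -> i2 < size X ->
  (forall w, w \in S -> exists2 m, i1 <= m <= i2 & w \in bag X m) ->
  is_dpd S E (restrict_bags X i1 i2 S).
Proof.
move=> /subsetP SW i12 i2X inS; split; [|split].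
- apply/setP => w; apply/bigcupP/idP.
    case=> -[k /= kR] _; rewrite bag_restrict_bags ?inE => [/andP[] //|].
    by rewrite -ltnS -(size_restrict_bags X i1 i2 S).
  move=> wS; have [m hm wm] := inS w wS.
  have kR : m - i1 < size (restrict_bags X i1 i2 S).
    by rewrite size_restrict_bags; lia.
  by exists (Ordinal kR); rewrite //= mem_restrict_bags // wm wS.
- move=> u v uS vS Euv.
  have [i [j [ij jX ui vj]]] := dpd_arc (SW u uS) (SW v vS) Euv.
  have [mu hmu umu] := inS u uS; have [mv hmv vmv] := inS v vS.
  have [ci cj cij] : [/\ i1 <= clamp i1 i2 i <= i2, i1 <= clamp i1 i2 j <= i2
                      & clamp i1 i2 i <= clamp i1 i2 j] by rewrite /clamp; split; lia.
  exists (clamp i1 i2 i - i1), (clamp i1 i2 j - i1).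
  split; first (by lia); first by rewrite size_restrict_bags; lia.
  + rewrite mem_restrict_bags; last by lia.
    by rewrite uS andbT (mem_bag_clamp hmu) //; lia.
  + rewrite mem_restrict_bags; last by lia.
    by rewrite vS andbT (mem_bag_clamp hmv).
- move=> u i j l hl; rewrite size_restrict_bags ltnS => hj.
  rewrite !bag_restrict_bags; try lia.
  rewrite !inE => /andP[ui ->] /andP[uj _]; rewrite andbT.
  by apply: (dpd_between _ _ ui uj); lia.
Qed.

End DirectedPathDecomposition.

Theorem lemma3p7 (V : finType) (E : rel V) (X : seq {set V}) (A B : {set V}) :
  irreflexive E ->
  is_dpd [set: V] E X ->
  [disjoint A & B] ->
  (forall u v, u \in A -> v \in B -> E u v /\ E v u) ->
  (exists i, i < size X /\ A \subset bag X i) ->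
  exists i1 i2, [/\ i1 <= i2, i2 < size X,
    (forall i, i1 <= i <= i2 -> A \subset bag X i),
    B \subset \bigcup_(i < size X | i1 <= i <= i2) bag X i &
    is_dpd (A :|: B) E (restrict_bags X i1 i2 (A :|: B))].
Proof.
move=> _ dpdX _ EAB [i0 [i0X Ai0]].
pose holdsA i := (i < size X) && (A \subset bag X i).
have exA : exists i, holdsA i by exists i0; apply/andP.
have boundA i : holdsA i -> i <= size X by case/andP => /ltnW.
have [i1 /andP[i1X Ai1] i1_min] := ex_minnP exA.
have [i2 /andP[i2X Ai2] i2_max] := ex_maxnP exA boundA.
have window i : i < size X -> A \subset bag X i -> i1 <= i <= i2.
  by move=> iX Ai; rewrite i1_min ?i2_max //; apply/andP.
have /andP[i12 _] := window i2 i2X Ai2.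
have B_window b : b \in B -> exists2 j, i1 <= j <= i2 & b \in bag X j.
  move=> Bb; apply: (mem_bag_window dpdX (subsetT A) i2X Ai1 Ai2 window).
  - exact: in_setT.
  - by move=> a Aa; apply: EAB.
exists i1, i2; split => //.
- by move=> i hi; apply: (subset_bag_between dpdX hi i2X Ai1 Ai2).
- apply/subsetP => b /B_window[j hj bj]; apply/bigcupP.
  by exists (Ordinal (leq_ltn_trans (proj2 (andP hj)) i2X)).
- apply: (restrict_bags_dpd dpdX (subsetT _) i12 i2X) => w /setUP[Aw | /B_window //].
  by exists i1; [rewrite leqnn | exact: subsetP Ai1 w Aw].
Qed.
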